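(* Let $a>0$ and let $P_+^a(x_i)$ denote the smallest $x>x_i$ at which the solution of $y'=-ay-\sin(3\pi x/2)$ with $y(x_i)=0$ vanishes. Then $P_+^a(\tfrac{10}{3})\in(4,\tfrac{14}{3})$ for all $a>0$. Moreover, for every $\delta_1>0$ (small) there exists $a_1>0$ (large) such that $P_+^a(\tfrac{10}{3})\in(4,4+\delta_1)$ for all $a\in(a_1,+\infty)$. *)

From Stdlib Require Export Reals.
Open Scope R_scope.

Definition is_sol (a xi : R) (y : R -> R) : Prop :=
  (forall x, derivable_pt_lim y x (- a * y x - sin (3 * PI * x / 2))) /\ y xi = 0.

Definition first_zero_after (y : R -> R) (xi p : R) : Prop :=
  xi < p /\ y p = 0 /\ (forall x, xi < x < p -> y x <> 0).

From Stdlib Require Import Reals Lra.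
From Coquelicot Require Import Coquelicot.
Open Scope R_scope.

(* With the integrating factor, z x = exp (a x) y x solves
   z' x = - exp (a x) sin (3 pi x / 2) and z (10/3) = 0, so z increases on
   (10/3, 4) and decreases on (4, 14/3).  Shifting x by 2/3 multiplies z' by
   - exp (2a/3), hence z (x + 2/3) + exp (2a/3) z x is constant; evaluating at
   10/3 and 4 gives z (14/3) = (1 - exp (2a/3)) z 4 < 0, so z has a zero p in
   (4, 14/3) and, by monotonicity, none in (10/3, p).
   For large a, z 4 <= exp (4a) / a is small compared to the decrease of z on
   [4, 4 + d], which is of order exp (4a) sin (3 pi d / 4) d / 2; thus
   z (4 + d) < 0 and p < 4 + d. *)

Section Derivative_sign.

Variables f f' : R -> R.
Hypothesis f_deriv : forall x, derivable_pt_lim f x (f' x).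

Lemma MVT_lim u v : u < v -> exists c, u < c < v /\ f v - f u = f' c * (v - u).
Proof.
  intros Huv. destruct (MVT_cor2 f f' u v Huv) as [c [Hc Hcuv]].
  - intros; apply f_deriv.
  - now exists c.
Qed.

Lemma increasing_of_deriv_pos u v :
  u < v -> (forall x, u < x < v -> 0 < f' x) -> f u < f v.
Proof.
  intros Huv Hpos. destruct (MVT_lim u v Huv) as [c [Hc Hmvt]].
  specialize (Hpos c Hc). nra.
Qed.

Lemma decreasing_of_deriv_neg u v :
  u < v -> (forall x, u < x < v -> f' x < 0) -> f v < f u.
Proof.
  intros Huv Hneg. destruct (MVT_lim u v Huv) as [c [Hc Hmvt]].
  specialize (Hneg c Hc). nra.
Qed.

Lemma increment_le_of_deriv_le u v M :
  u < v -> (forall x, u < x < v -> f' x <= M) -> f v - f u <= M * (v - u).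
Proof.
  intros Huv Hle. destruct (MVT_lim u v Huv) as [c [Hc Hmvt]].
  specialize (Hle c Hc). nra.
Qed.

Lemma continuity_of_deriv : continuity f.
Proof. intro x. apply derivable_continuous_pt. exists (f' x). apply f_deriv. Qed.

End Derivative_sign.

Definition scaled_sol (a : R) (y : R -> R) (x : R) : R := exp (a * x) * y x.

Definition forcing (a x : R) : R := - exp (a * x) * sin (3 * PI * x / 2).

Lemma derivable_pt_lim_exp_scal a x :
  derivable_pt_lim (fun t => exp (a * t)) x (a * exp (a * x)).
Proof. apply is_derive_Reals. auto_derive; auto. ring. Qed.

Lemma scaled_sol_pos a y x : 0 < scaled_sol a y x <-> 0 < y x.
Proof.
  unfold scaled_sol. pose proof (exp_pos (a * x)).
  split; intros H'; nra.
Qed.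

Lemma scaled_sol_neg a y x : scaled_sol a y x < 0 <-> y x < 0.
Proof.
  unfold scaled_sol. pose proof (exp_pos (a * x)).
  split; intros H'; nra.
Qed.

Lemma scaled_sol_eq0 a y x : scaled_sol a y x = 0 <-> y x = 0.
Proof.
  unfold scaled_sol. pose proof (exp_pos (a * x)).
  split; intros H'; [destruct (Rmult_integral _ _ H'); lra | rewrite H'; ring].
Qed.

Lemma sin_shift_4 x : sin (3 * PI * x / 2) = sin (3 * PI * (x - 4) / 2).
Proof.
  replace (3 * PI * x / 2) with (3 * PI * (x - 4) / 2 + 2 * INR 3 * PI)
    by (simpl; field).
  apply sin_period.
Qed.

Lemma forcing_pos a x : 10/3 < x < 4 -> 0 < forcing a x.
Proof.
  intros Hx. unfold forcing. rewrite sin_shift_4.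
  pose proof PI_RGT_0. pose proof (exp_pos (a * x)).
  assert (sin (3 * PI * (x - 4) / 2) < 0) by (apply sin_lt_0_var; nra).
  nra.
Qed.

Lemma forcing_neg a x : 4 < x < 14/3 -> forcing a x < 0.
Proof.
  intros Hx. unfold forcing. rewrite sin_shift_4.
  pose proof PI_RGT_0. pose proof (exp_pos (a * x)).
  assert (0 < sin (3 * PI * (x - 4) / 2)) by (apply sin_gt_0; nra).
  nra.
Qed.

Lemma forcing_shift a x : forcing a (x + 2/3) = - exp (2 * a / 3) * forcing a x.
Proof.
  unfold forcing.
  replace (a * (x + 2/3)) with (a * x + 2 * a / 3) by field. rewrite exp_plus.
  replace (3 * PI * (x + 2/3) / 2) with (3 * PI * x / 2 + PI) by field.
  rewrite neg_sin. ring.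
Qed.

Lemma forcing_le_exp a x : forcing a x <= exp (a * x).
Proof.
  unfold forcing. pose proof (SIN_bound (3 * PI * x / 2)).
  pose proof (exp_pos (a * x)). nra.
Qed.

Lemma forcing_le_near_4 a d x :
  0 < a -> 0 < d <= 1/3 -> 4 + d / 2 < x < 4 + d ->
  forcing a x <= - exp (a * 4) * sin (3 * PI * d / 4).
Proof.
  intros Ha Hd Hx. pose proof PI_RGT_0.
  unfold forcing. rewrite sin_shift_4.
  assert (0 < sin (3 * PI * d / 4)) by (apply sin_gt_0; nra).
  assert (sin (3 * PI * d / 4) <= sin (3 * PI * (x - 4) / 2))
    by (apply sin_incr_1; nra).
  assert (exp (a * 4) <= exp (a * x)) by (apply Rlt_le, exp_increasing; nra).
  pose proof (exp_pos (a * 4)). nra.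
Qed.

Section Solution.

Variables (a : R) (y : R -> R).
Hypothesis y_sol : is_sol a (10/3) y.

Lemma scaled_sol_deriv x : derivable_pt_lim (scaled_sol a y) x (forcing a x).
Proof.
  destruct y_sol as [y_deriv _]. unfold scaled_sol, forcing.
  replace (- exp (a * x) * sin (3 * PI * x / 2)) with
    (a * exp (a * x) * y x + exp (a * x) * (- a * y x - sin (3 * PI * x / 2)))
    by ring.
  apply (derivable_pt_lim_mult (fun t => exp (a * t)) y x).
  - apply derivable_pt_lim_exp_scal.
  - apply y_deriv.
Qed.

Lemma scaled_sol_start : scaled_sol a y (10/3) = 0.
Proof. apply scaled_sol_eq0, y_sol. Qed.

Lemma scaled_sol_4_pos : 0 < scaled_sol a y 4.
Proof.
  rewrite <- scaled_sol_start.
  apply (increasing_of_deriv_pos _ _ scaled_sol_deriv); [lra | apply forcing_pos].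
Qed.

Lemma scaled_sol_14_3 :
  scaled_sol a y (14/3) = scaled_sol a y 4 * (1 - exp (2 * a / 3)).
Proof.
  set (E := exp (2 * a / 3)).
  set (w := fun x => scaled_sol a y (x + 2/3) + E * scaled_sol a y x).
  assert (w_deriv : forall x, derivable_pt_lim w x 0).
  { intro x. unfold w.
    replace 0 with (forcing a (x + 2/3) * 1 + (0 * scaled_sol a y x + E * forcing a x))
      by (rewrite forcing_shift; unfold E; ring).
    apply (derivable_pt_lim_plus (fun t => scaled_sol a y (t + 2/3))).
    - apply (derivable_pt_lim_comp (fun t => t + 2/3)).
      + apply is_derive_Reals. auto_derive; auto.
      + apply scaled_sol_deriv.
    - apply derivable_pt_lim_mult.
      + apply derivable_pt_lim_const.
      + apply scaled_sol_deriv. }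
  destruct (MVT_lim w (fun _ => 0) w_deriv (10/3) 4) as [_ [_ Hw]]; [lra |].
  unfold w in Hw. rewrite scaled_sol_start in Hw.
  replace (10/3 + 2/3) with 4 in Hw by field.
  replace (4 + 2/3) with (14/3) in Hw by field.
  lra.
Qed.

Lemma sol_first_zero :
  0 < a -> exists p, 4 < p < 14/3 /\ y p = 0 /\ forall x, 10/3 < x < p -> 0 < y x.
Proof.
  intros Ha. pose proof scaled_sol_4_pos as H4.
  assert (H14 : scaled_sol a y (14/3) < 0).
  { assert (1 < exp (2 * a / 3)) by (rewrite <- exp_0; apply exp_increasing; lra).
    rewrite scaled_sol_14_3. nra. }
  destruct (IVT_cor _ 4 (14/3) (continuity_of_deriv _ _ scaled_sol_deriv))
    as [p [Hp Hp0]]; [lra | nra |].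
  assert (4 < p < 14/3).
  { split; apply Rnot_le_lt; intros Hle.
    - replace p with 4 in Hp0 by lra. lra.
    - replace p with (14/3) in Hp0 by lra. lra. }
  exists p. split; [lra | split; [now apply (scaled_sol_eq0 a) |]].
  intros x Hx. apply (scaled_sol_pos a). destruct (Rle_lt_dec x 4).
  - rewrite <- scaled_sol_start.
    apply (increasing_of_deriv_pos _ _ scaled_sol_deriv); [lra |].
    intros t Ht. apply forcing_pos. lra.
  - rewrite <- Hp0.
    apply (decreasing_of_deriv_neg _ _ scaled_sol_deriv); [lra |].
    intros t Ht. apply forcing_neg. lra.
Qed.

Lemma scaled_sol_4_lt : 0 < a -> scaled_sol a y 4 < exp (a * 4) / a.
Proof.
  intros Ha.
  set (h := fun x => scaled_sol a y x - exp (a * x) / a).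
  assert (h_deriv : forall x, derivable_pt_lim h x (forcing a x - exp (a * x))).
  { intro x. apply (derivable_pt_lim_minus (scaled_sol a y)).
    - apply scaled_sol_deriv.
    - apply is_derive_Reals. auto_derive; auto. field. lra. }
  assert (Hh : h 4 - h (10/3) <= 0 * (4 - 10/3)).
  { apply (increment_le_of_deriv_le _ _ h_deriv); [lra |].
    intros x _. pose proof (forcing_le_exp a x). lra. }
  unfold h in Hh. rewrite scaled_sol_start in Hh.
  assert (0 < exp (a * (10/3)) / a) by (apply Rdiv_lt_0_compat; [apply exp_pos | lra]).
  lra.
Qed.

Definition threshold (d : R) : R := 2 / (sin (3 * PI * d / 4) * d).

Lemma threshold_pos d : 0 < d <= 1/3 -> 0 < threshold d.
Proof.
  intros Hd. pose proof PI_RGT_0.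
  assert (0 < sin (3 * PI * d / 4)) by (apply sin_gt_0; nra).
  apply Rdiv_lt_0_compat; nra.
Qed.

Lemma sol_neg_after_4 d : 0 < d <= 1/3 -> threshold d < a -> y (4 + d) < 0.
Proof.
  intros Hd Ha.
  assert (Ha0 : 0 < a) by (pose proof (threshold_pos d Hd); lra).
  unfold threshold in Ha.
  set (K := sin (3 * PI * d / 4)) in *.
  assert (HK : 0 < K) by (pose proof PI_RGT_0; apply sin_gt_0; unfold K; nra).
  apply (scaled_sol_neg a).
  assert (Hmid : scaled_sol a y (4 + d / 2) < scaled_sol a y 4).
  { apply (decreasing_of_deriv_neg _ _ scaled_sol_deriv); [lra |].
    intros x Hx. apply forcing_neg. lra. }
  assert (Hdrop : scaled_sol a y (4 + d) - scaled_sol a y (4 + d / 2)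
                  <= - exp (a * 4) * K * (4 + d - (4 + d / 2))).
  { apply (increment_le_of_deriv_le _ _ scaled_sol_deriv); [lra |].
    intros x Hx. apply forcing_le_near_4; lra. }
  assert (Hinv : 1 / a < K * d / 2).
  { assert (0 < K * d) by nra.
    apply (Rmult_lt_reg_r (2 * a / (K * d))).
    - apply Rdiv_lt_0_compat; lra.
    - replace (1 / a * (2 * a / (K * d))) with (2 / (K * d)) by (field; lra).
      replace (K * d / 2 * (2 * a / (K * d))) with a by (field; lra). lra. }
  pose proof (scaled_sol_4_lt Ha0) as H4.
  pose proof (exp_pos (a * 4)).
  replace (exp (a * 4) / a) with (exp (a * 4) * (1 / a)) in H4 by (field; lra).
  nra.
Qed.

End Solution.

Lemma first_zero_after_of_pos y xi p :
  xi < p -> y p = 0 -> (forall x, xi < x < p -> 0 < y x) -> first_zero_after y xi p.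
Proof.
  intros Hp Hp0 Hpos. split; [lra | split; [exact Hp0 |]].
  intros x Hx. specialize (Hpos x Hx). lra.
Qed.

Theorem lemma4 :
  (forall (a : R), 0 < a ->
     forall y : R -> R, is_sol a (10/3) y ->
       exists p, first_zero_after y (10/3) p /\ 4 < p < 14/3) /\
  (forall d1 : R, 0 < d1 ->
     exists a1 : R, 0 < a1 /\
       forall (a : R), a1 < a ->
         forall y : R -> R, is_sol a (10/3) y ->
           exists p, first_zero_after y (10/3) p /\ 4 < p < 4 + d1).
Proof.
  split.
  - intros a Ha y Hy. destruct (sol_first_zero a y Hy Ha) as [p [Hp [Hp0 Hpos]]].
    exists p. split; [apply first_zero_after_of_pos; auto; lra | lra].
  - intros d1 Hd1. set (d := Rmin d1 (1/3)).
    assert (Hd : 0 < d <= 1/3 /\ d <= d1).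
    { unfold d. pose proof (Rmin_l d1 (1/3)). pose proof (Rmin_r d1 (1/3)).
      assert (0 < Rmin d1 (1/3)) by (apply Rmin_glb_lt; lra). lra. }
    exists (threshold d). split; [now apply threshold_pos |].
    intros a Ha y Hy. pose proof (threshold_pos d (proj1 Hd)).
    destruct (sol_first_zero a y Hy ltac:(lra)) as [p [Hp [Hp0 Hpos]]].
    pose proof (sol_neg_after_4 a y Hy d (proj1 Hd) Ha) as Hneg.
    exists p. split; [apply first_zero_after_of_pos; auto; lra |].
    assert (p < 4 + d).
    { apply Rnot_le_lt. intros Hle.
      destruct (Rle_lt_or_eq_dec (4 + d) p Hle) as [Hlt | Heq].
      - specialize (Hpos (4 + d) ltac:(lra)). lra.
      - rewrite Heq in Hneg. lra. }
    lra.
Qed.
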